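(* Under the assumptions of the preceding theorem (closed sum property, $\delta>0$ with $\|[g]\|_q\le\frac1\delta\|Sg\|_{L^2(\mu)}$ for all $g\in\overline H$, $\psi$ $(\sigma_R)_{R>0}$-strongly convex on bounded sets, and $\mathcal M\subset H$ uniformly bounded in summation around $c$ with radius $R$), for all $\tilde h,h\in\mathcal M$, $$F(\tilde h)-F(h)\ \ge\ -\frac{1}{2\delta^2\sigma_R}\,\|d\hat F([h],\cdot)\|_q^2 .$$
   Context: Let $(\mathcal X,\mu)$ be a finite measure space, $N\ge1$, $c\in L^\infty(\mu)$, $\psi:\mathbb R\to\mathbb R$ continuously differentiable. $\psi$ is $(\sigma_R)_{R>0}$-strongly convex on bounded sets if for each $R>0$, $\sigma_R>0$ and $\psi(\tilde s)\ge\psi(s)+\psi'(s)(\tilde s-s)+\frac{\sigma_R}{2}(\tilde s-s)^2$ for all $s,\tilde s\in(-R,R)$. Let $H_1,\dots,H_N$ be linear subspaces of $L^\infty(\mu)$, $H=H_1\times\dots\times H_N$, $Sh=\sum_i h_i$. $\mathcal M\subset H$ is uniformly bounded in summation around $c$ with radius $R$ if $\|Sh-c\|_{L^\infty(\mu)}<R$ for all $h\in\mathcal M$. $F(h)=\int(\psi(Sh-c)-Sh)\,d\mu$, $dF(h,r)=\int(\psi'(Sh-c)-1)Sr\,d\mu$. Let $\overline H_i$ be the $L^2(\mu)$-closure of $H_i$; closed sum property: $\{\sum_i g_i:g_i\in\overline H_i\}$ is closed in $L^2(\mu)$. $\overline H=\prod_i\overline H_i$ with $\|h\|_{\mathrm{sum}}=(\sum_i\|h_i\|^2_{L^2(\mu)})^{1/2}$,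 $\ker S=\{h\in\overline H:Sh=0\}$, $[h]=h+\ker S$, $\|[h]\|_q=\inf_{\tilde h\in[h]}\|\tilde h\|_{\mathrm{sum}}$, $\hat H_\infty=\{[h]:h\in H\}$, $d\hat F([h],[r])=dF(h,r)$, and $\|d\hat F([h],\cdot)\|_q=\sup\{|dF(h,r)|:r\in H,\|[r]\|_q\le1\}$. *)

From HB Require Import structures.
From mathcomp Require Import all_boot all_order all_algebra.
From mathcomp Require Import all_classical all_reals all_analysis.
Set Implicit Arguments. Unset Strict Implicit. Unset Printing Implicit Defensive.
Import Order.TTheory GRing.Theory Num.Theory.
Import numFieldNormedType.Exports.
Local Open Scope classical_set_scope.
Local Open Scope ring_scope.

Section Defs.
Context {d : measure_display} {X : measurableType d} {R : realType}.
Variable mu : {measure set X -> \bar R}.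

Definition Linf (f : X -> R) : Prop :=
  measurable_fun setT f /\ exists M : R, {ae mu, forall x, `|f x| <= M}.

Definition Linfnorm (f : X -> R) : \bar R := Lnorm mu +oo%E (EFin \o f).
Definition L2norm (f : X -> R) : R := fine (Lnorm mu 2%:E (EFin \o f)).

Definition is_subspace (A : set (X -> R)) : Prop :=
  A `<=` Linf /\ A (fun _ => 0) /\
  (forall (a : R) f g, A f -> A g -> A (fun x => a * f x + g x)).

Definition L2closure (A : set (X -> R)) (g : X -> R) : Prop :=
  measurable_fun setT g /\ (Lnorm mu 2%:E (EFin \o g) < +oo)%E /\
  exists u : nat -> X -> R, (forall n, A (u n)) /\
    (fun n => Lnorm mu 2%:E (EFin \o (u n \- g))) @ \oo --> 0%E.

Variable N : nat.

Definition Ssum (h : 'I_N -> X -> R) : X -> R := fun x => \sum_(i < N) h i x.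

Definition inH (Hs : 'I_N -> set (X -> R)) (h : 'I_N -> X -> R) : Prop :=
  forall i, Hs i (h i).

Definition inHbar (Hs : 'I_N -> set (X -> R)) (h : 'I_N -> X -> R) : Prop :=
  forall i, L2closure (Hs i) (h i).

(* closed sum property: {sum_i g_i : g_i in closure(H_i)} is closed in L^2(mu) *)
Definition closed_sum_property (Hs : 'I_N -> set (X -> R)) : Prop :=
  forall (f : X -> R) (u : nat -> X -> R),
    measurable_fun setT f -> (Lnorm mu 2%:E (EFin \o f) < +oo)%E ->
    (forall n, exists g, inHbar Hs g /\ {ae mu, forall x, u n x = Ssum g x}) ->
    (fun n => Lnorm mu 2%:E (EFin \o (u n \- f))) @ \oo --> 0%E ->
    exists g, inHbar Hs g /\ {ae mu, forall x, f x = Ssum g x}.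

Definition sumnorm (h : 'I_N -> X -> R) : R :=
  Num.sqrt (\sum_(i < N) (L2norm (h i)) ^+ 2).

(* ||[h]||_q = inf over htilde in h + ker S of ||htilde||_sum;
   htilde in h + ker S  <->  htilde in Hbar and S htilde = S h in L^2 (a.e.) *)
Definition qnorm (Hs : 'I_N -> set (X -> R)) (h : 'I_N -> X -> R) : R :=
  inf [set sumnorm ht | ht in
        [set ht | inHbar Hs ht /\ {ae mu, forall x, Ssum ht x = Ssum h x}]].

Definition Ffun (psi : R -> R) (c : X -> R) (h : 'I_N -> X -> R) : R :=
  Rintegral mu setT (fun x => psi (Ssum h x - c x) - Ssum h x).

Definition dF (psi : R -> R) (c : X -> R) (h r : 'I_N -> X -> R) : R :=
  Rintegral mu setT (fun x => ((derive1 psi) (Ssum h x - c x) - 1) * Ssum r x).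

Definition dFqnorm (Hs : 'I_N -> set (X -> R)) (psi : R -> R) (c : X -> R)
    (h : 'I_N -> X -> R) : \bar R :=
  ereal_sup [set (`|dF psi c h r|)%:E | r in [set r | inH Hs r /\ qnorm Hs r <= 1]].

Definition unif_bdd_sum (c : X -> R) (M : set ('I_N -> X -> R)) (Rad : R) : Prop :=
  forall h, M h -> (Linfnorm (fun x => (Ssum h x - c x)%R) < Rad%:E)%E.

End Defs.

Definition strongly_convex_bdd {R : realType} (psi : R -> R) (sigma : R -> R) : Prop :=
  forall Rad : R, 0 < Rad ->
    0 < sigma Rad /\
    forall s st : R, - Rad < s < Rad -> - Rad < st < Rad ->
      psi s + (derive1 psi) s * (st - s) + sigma Rad / 2 * (st - s) ^+ 2 <= psi st.

From HB Require Import structures.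
From mathcomp Require Import all_boot all_order all_algebra.
From mathcomp Require Import all_classical all_reals all_analysis.
From mathcomp Require Import measurable_realfun ess_sup_inf.
From mathcomp Require Import ring lra.
Import Order.TTheory GRing.Theory Num.Theory.
Import numFieldNormedType.Exports.
Local Open Scope classical_set_scope.
Local Open Scope ring_scope.

(* Put r := h~ - h.  Strong convexity of psi on (-R, R), applied pointwise to
   S h - c and S h~ - c and integrated, gives
     F(h~) - F(h) >= dF(h, r) + sigma_R / 2 * ||S r||^2.
   By definition of the dual norm and the delta-inequality,
     dF(h, r) >= - ||dF^([h], .)||_q ||[r]||_q >= - ||dF^([h], .)||_q ||S r|| / delta,
   and minimising the resulting quadratic in ||S r|| yields the bound.  An
   infinite dual norm makes the left-hand side -oo. *)

Section Linf.
Context {d : measure_display} {X : measurableType d} {R : realType}.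
Context {mu : {measure set X -> \bar R}}.
Implicit Types (f g : X -> R).

Lemma Linf_bounded {f} :
  Linf mu f -> exists M, 0 <= M /\ {ae mu, forall x, `|f x| <= M}.
Proof.
move=> [_ [M HM]]; exists `|M|; split => //.
by apply: filterS HM => x /le_trans; apply; exact: ler_norm.
Qed.

Lemma Linf_cst k : Linf mu (fun _ => k).
Proof. by split; [exact: measurable_cst | exists `|k|; exact: aeW]. Qed.

Lemma LinfD {f g} : Linf mu f -> Linf mu g -> Linf mu (fun x => f x + g x).
Proof.
move=> Lf Lg; split; first by apply: measurable_funD; [case: Lf | case: Lg].
have [M1 [_ H1]] := Linf_bounded Lf; have [M2 [_ H2]] := Linf_bounded Lg.
exists (M1 + M2); apply: filterS2 H1 H2 => x h1 h2.
by rewrite (le_trans (ler_normD _ _))// lerD.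
Qed.

Lemma LinfM {f g} : Linf mu f -> Linf mu g -> Linf mu (fun x => f x * g x).
Proof.
move=> Lf Lg; split; first by apply: measurable_funM; [case: Lf | case: Lg].
have [M1 [M10 H1]] := Linf_bounded Lf; have [M2 [M20 H2]] := Linf_bounded Lg.
exists (M1 * M2); apply: filterS2 H1 H2 => x h1 h2.
by rewrite normrM ler_pM.
Qed.

Lemma LinfB {f g} : Linf mu f -> Linf mu g -> Linf mu (fun x => f x - g x).
Proof.
move=> Lf Lg; have := LinfD Lf (LinfM (Linf_cst (-1)) Lg).
by under eq_fun do rewrite mulN1r.
Qed.

Lemma Linf_Ssum N (h : 'I_N -> X -> R) : (forall i, Linf mu (h i)) -> Linf mu (Ssum h).
Proof.
move=> Lh; rewrite /Ssum; elim: (index_enum _) => [|i s IH].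
  by under eq_fun do rewrite big_nil; exact: Linf_cst.
by under eq_fun do rewrite big_cons; exact: LinfD.
Qed.

Lemma Linf_comp {phi : R -> R} {f} : continuous phi -> Linf mu f ->
  Linf mu (fun x => phi (f x)).
Proof.
move=> phi_cont Lf; have [m [m0 Hm]] := Linf_bounded Lf; split.
  exact: measurableT_comp (continuous_measurable_fun phi_cont) (proj1 Lf).
have Nm_le_m : - m <= m by rewrite (le_trans _ m0)// oppr_le0.
have norm_phi_cont : {within `[- m, m], continuous (fun y => `|phi y|)}.
  by apply: continuous_subspaceT => y; apply: continuous_comp (phi_cont y) _;
    exact: norm_continuous.
have [y0 _ y0_max] := EVT_max Nm_le_m norm_phi_cont.
exists `|phi y0|; apply: filterS Hm => x hx; apply: y0_max.
by rewrite in_itv /= -ler_norml.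
Qed.

Lemma le_Rintegral_ae f g : mu.-integrable setT (EFin \o f) ->
  mu.-integrable setT (EFin \o g) -> {ae mu, forall x, f x <= g x} ->
  Rintegral mu setT f <= Rintegral mu setT g.
Proof.
move=> fi gi fleg; rewrite -subr_ge0 -RintegralB// /Rintegral fine_ge0//.
have mgf : measurable_fun setT (fun x => g x - f x).
  by apply: measurable_funB; apply/measurable_EFinP;
    [exact: measurable_int gi | exact: measurable_int fi].
rewrite (ae_eq_integral (fun x => (`|g x - f x|)%:E))//.
- by apply: integral_ge0 => x _; rewrite lee_fin.
- exact/measurable_EFinP.
- exact/measurable_EFinP/measurableT_comp.
- by apply: filterS fleg => x hx _; rewrite ger0_norm// subr_ge0.
Qed.

Lemma L2norm_ge0 f : 0 <= L2norm mu f.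
Proof. by rewrite /L2norm fine_ge0// Lnorm_ge0. Qed.

Lemma L2norm_sqr f : L2norm mu f ^+ 2 = Rintegral mu setT (fun x => f x ^+ 2).
Proof.
rewrite /L2norm /Rintegral -powR_mulrn ?fine_ge0 ?Lnorm_ge0//.
rewrite -fine_poweR powR_Lnorm ?pnatr_eq0//; congr fine.
by apply: eq_integral => x _ /=; rewrite powR_mulrn// real_normK// num_real.
Qed.

Lemma Linfnorm_lt {f} {r : R} : 0 < r -> (Linfnorm mu f < r%:E)%E ->
  exists m, m < r /\ {ae mu, forall x, `|f x| <= m}.
Proof.
move=> r0; rewrite /Linfnorm unlock /=; case: ifPn => mu0; last first.
  move=> _; exists 0; split => //; apply: measure0_ae.
  by apply/eqP; rewrite eq_le measure_ge0 andbT leNgt.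
have := ess_sup_ge mu (abse \o (EFin \o f)).
case: (ess_sup mu (abse \o (EFin \o f))) => [s| |] sup_ge.
- move=> sr; exists s; split; first by rewrite -lte_fin.
  by apply: filterS sup_ge => x /=; rewrite lee_fin.
- by rewrite ltNge leey.
- by move=> _; exists 0; split => //; apply: filterS sup_ge => x /=; rewrite leeNy_eq.
Qed.

End Linf.

Section LinfFinite.
Context {d : measure_display} {X : measurableType d} {R : realType}.
Context {mu : {finite_measure set X -> \bar R}}.
Implicit Types (f g : X -> R).

Lemma Linf_integrable {f} : Linf mu f -> mu.-integrable setT (EFin \o f).
Proof.
move=> Lf; have [M [M0 HM]] := Linf_bounded Lf.
apply/integrableP; split; first by apply/measurable_EFinP; case: Lf.
apply: le_lt_trans (integral_le_bound M%:E _ _ _ _) _ => //.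
- by apply/measurable_EFinP/measurableT_comp => //; case: Lf.
- by apply: filterS HM => x hx _ /=; rewrite lee_fin.
- by rewrite lte_mul_pinfty// ?lee_fin// fin_num_fun_lty//; exact: fin_num_measure.
Qed.

Lemma Linf_Lnorm2_lty {f} : Linf mu f -> (Lnorm mu 2%:E (EFin \o f) < +oo)%E.
Proof.
move=> Lf; apply: (@lty_poweRy _ _ 2); first by rewrite pnatr_eq0.
rewrite powR_Lnorm ?pnatr_eq0//.
case/integrableP: (Linf_integrable (LinfM Lf Lf)) => _; apply: le_lt_trans.
rewrite le_eqVlt; apply/orP; left; apply/eqP; apply: eq_integral => x _ /=.
by rewrite powR_mulrn// real_normK ?num_real// -expr2 ger0_norm// sqr_ge0.
Qed.

Lemma L2normZ {f} {a} : 0 <= a -> Linf mu f ->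
  L2norm mu (fun x => a * f x) = a * L2norm mu f.
Proof.
move=> a_ge0 Lf; apply/eqP; rewrite -(@eqrXn2 _ 2)// ?mulr_ge0// ?L2norm_ge0//.
rewrite exprMn !L2norm_sqr -RintegralZl//.
  by apply/eqP; apply: eq_Rintegral => x _; rewrite exprMn.
exact: Linf_integrable (LinfM Lf Lf).
Qed.

Lemma L2closure_sub (A : set (X -> R)) f : A `<=` Linf mu -> A f -> L2closure mu A f.
Proof.
move=> AL Af; have Lf := AL _ Af; split; first exact: (proj1 Lf).
split; first exact: Linf_Lnorm2_lty.
exists (fun _ => f); split => //.
rewrite (_ : (fun n => _) = fun _ => 0%E); first exact: cvg_cst.
apply/funext => n; rewrite (@eq_Lnorm _ _ _ _ _ _ (cst 0%E)) ?Lnorm0//.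
by move=> x /=; rewrite subrr.
Qed.

End LinfFinite.

Section Subspace.
Context {d : measure_display} {X : measurableType d} {R : realType}.
Context {mu : {measure set X -> \bar R}}.
Context {A : set (X -> R)}.
Hypothesis A_sub : is_subspace mu A.

Lemma subspaceZ k {f} : A f -> A (fun x => k * f x).
Proof.
move=> Af; have := A_sub.2.2 k _ _ Af A_sub.2.1.
by under eq_fun do rewrite addr0.
Qed.

Lemma subspaceB {f g} : A f -> A g -> A (fun x => f x - g x).
Proof.
move=> Af Ag; have := A_sub.2.2 (-1) _ _ Ag Af.
by under eq_fun do rewrite mulN1r addrC.
Qed.

End Subspace.

Section Ssum.
Context {d : measure_display} {X : measurableType d} {R : realType} {N : nat}.
Implicit Types (f g : 'I_N -> X -> R).

Lemma SsumZ k f : Ssum (fun i x => k * f i x) = (fun x => k * Ssum f x).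
Proof. by apply/funext => x; rewrite /Ssum mulr_sumr. Qed.

Lemma SsumB f g x : Ssum (fun i x => f i x - g i x) x = Ssum f x - Ssum g x.
Proof. by rewrite /Ssum sumrB. Qed.

End Ssum.

Section FirstOrderExpansion.
Context {d : measure_display} {X : measurableType d} {R : realType}.
Context {mu : {finite_measure set X -> \bar R}}.
Context {N : nat} {c : X -> R} {psi : R -> R}.
Hypotheses (Lc : Linf mu c) (dpsi_cont : continuous (derive1 psi)).
Implicit Types (h r : 'I_N -> X -> R).

Lemma Linf_dF_integrand {h r} : Linf mu (Ssum h) -> Linf mu (Ssum r) ->
  Linf mu (fun x => (derive1 psi (Ssum h x - c x) - 1) * Ssum r x).
Proof.
move=> Lh Lr; apply: LinfM Lr; apply: LinfB (Linf_cst 1).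
exact: Linf_comp dpsi_cont (LinfB Lh Lc).
Qed.

Lemma dFZ {h r} k : Linf mu (Ssum h) -> Linf mu (Ssum r) ->
  dF mu psi c h (fun i x => k * r i x) = k * dF mu psi c h r.
Proof.
move=> Lh Lr; rewrite /dF SsumZ -RintegralZl//.
  by apply: eq_Rintegral => x _; rewrite mulrCA.
exact: Linf_integrable (Linf_dF_integrand Lh Lr).
Qed.

Context {sigma : R -> R} {Rad : R}.
Hypotheses (psi_cont : continuous psi) (psi_conv : strongly_convex_bdd psi sigma).
Hypothesis Rad_gt0 : 0 < Rad.

Lemma Ffun_sub_ge {h ht} : Linf mu (Ssum h) -> Linf mu (Ssum ht) ->
  (Linfnorm mu (fun x => (Ssum h x - c x)%R) < Rad%:E)%E ->
  (Linfnorm mu (fun x => (Ssum ht x - c x)%R) < Rad%:E)%E ->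
  dF mu psi c h (fun i x => ht i x - h i x) +
    sigma Rad / 2 * L2norm mu (Ssum (fun i x => ht i x - h i x)) ^+ 2 <=
  Ffun mu psi c ht - Ffun mu psi c h.
Proof.
move=> Lh Lht /(Linfnorm_lt Rad_gt0)[m1 [m1R Hm1]].
move=> /(Linfnorm_lt Rad_gt0)[m2 [m2R Hm2]]; set r := fun i x => _.
have Sr : Ssum r = (fun x => Ssum ht x - Ssum h x).
  by apply/funext => x; exact: SsumB.
have Lr : Linf mu (Ssum r) by rewrite Sr; exact: LinfB.
have LF (g : 'I_N -> X -> R) :
    Linf mu (Ssum g) -> Linf mu (fun x => psi (Ssum g x - c x) - Ssum g x).
  by move=> Lg; exact: LinfB (Linf_comp psi_cont (LinfB Lg Lc)) Lg.
have LdF := Linf_dF_integrand Lh Lr.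
have Lsq : Linf mu (fun x => Ssum r x ^+ 2).
  by under eq_fun do rewrite expr2; exact: (LinfM Lr Lr).
have LsqZ := LinfM (Linf_cst (sigma Rad / 2)) Lsq.
have iFh := Linf_integrable (LF _ Lh); have iFht := Linf_integrable (LF _ Lht).
have idF := Linf_integrable LdF; have isq := Linf_integrable Lsq.
have isqZ := Linf_integrable LsqZ.
rewrite /Ffun -RintegralB// L2norm_sqr /dF -RintegralZl// -RintegralD//.
apply: le_Rintegral_ae.
- exact: Linf_integrable (LinfD LdF LsqZ).
- exact: Linf_integrable (LinfB (LF _ Lht) (LF _ Lh)).
apply: filterS2 Hm1 Hm2 => x h1 h2.
have := (psi_conv Rad Rad_gt0).2 (Ssum h x - c x) (Ssum ht x - c x).
rewrite -!ltr_norml (le_lt_trans h1)// (le_lt_trans h2)// Sr /= expr2 => /(_ isT isT).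
nra.
Qed.

End FirstOrderExpansion.

Lemma ler_mul_from_above {R : realFieldType} (x D b : R) :
  (forall t, b < t -> x <= D * t) -> x <= D * b.
Proof.
move=> x_le; apply/ler_addgt0Pr => e e_gt0.
have D1_gt0 : 0 < 1 + `|D| by rewrite ltr_wpDr.
have k_gt0 : 0 < e / (1 + `|D|) by rewrite divr_gt0.
have := x_le (b + e / (1 + `|D|)); rewrite ltrDl => /(_ k_gt0) /le_trans; apply.
rewrite mulrDr lerD2l (le_trans (ler_wpM2r (ltW k_gt0) (ler_norm D)))//.
by rewrite mulrA ler_pdivrMr//; nra.
Qed.

Lemma quadratic_lower_bound {R : realFieldType} {s delta : R} (D L : R) :
  0 < s -> 0 < delta ->
  - (2 * delta ^+ 2 * s)^-1 * (D * D) <= - (D * (delta^-1 * L)) + s / 2 * L ^+ 2.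
Proof.
move=> s_gt0 delta_gt0.
have sqr_ge0 : 0 <= (s * L - D / delta) ^+ 2 / (2 * s).
  by rewrite divr_ge0 ?sqr_ge0// mulr_ge0// ltW.
have -> : - (D * (delta^-1 * L)) + s / 2 * L ^+ 2 =
    (s * L - D / delta) ^+ 2 / (2 * s) - (2 * delta ^+ 2 * s)^-1 * (D * D).
  by field; rewrite !gt_eqF.
by rewrite mulNr lerDr.
Qed.

Lemma oppe_mul_sqr_infty {R : realDomainType} (k y : R) (D : \bar R) :
  0 < k -> D \isn't a fin_num -> (- k%:E * (D * D) <= y%:E)%E.
Proof.
move=> k_gt0; case: D => // [_|_];
  by rewrite ?mulyy ?mulNyNy muleC lt0_mulye ?leNye// -EFinN lte_fin oppr_lt0.
Qed.

Section DualBound.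
Context {d : measure_display} {X : measurableType d} {R : realType}.
Context {mu : {finite_measure set X -> \bar R}} {N : nat}.
Context {Hs : 'I_N -> set (X -> R)} {psi : R -> R} {c : X -> R}.
Implicit Types (h r : 'I_N -> X -> R).

Lemma oppr_dF_le_dFqnorm {h r D} : inH Hs r -> qnorm mu Hs r <= 1 ->
  dFqnorm mu Hs psi c h = D%:E -> - dF mu psi c h r <= D.
Proof.
move=> r_in qr dFqE; rewrite lerNl; apply: lerNnormlW.
by rewrite -lee_fin -dFqE; apply: ereal_sup_ubound; exists r.
Qed.

Context {delta : R}.
Hypotheses (Hs_sub : forall i, is_subspace mu (Hs i)) (delta_gt0 : 0 < delta).
Hypothesis qnorm_le : forall g, inHbar mu Hs g ->
  qnorm mu Hs g <= delta^-1 * L2norm mu (Ssum g).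
Hypotheses (Lc : Linf mu c) (dpsi_cont : continuous (derive1 psi)).

Lemma Linf_Ssum_inH {r} : inH Hs r -> Linf mu (Ssum r).
Proof. by move=> r_in; apply: Linf_Ssum => i; exact: (Hs_sub i).1 _ (r_in i). Qed.

Lemma qnorm_inH_le {r} : inH Hs r -> qnorm mu Hs r <= delta^-1 * L2norm mu (Ssum r).
Proof.
by move=> r_in; apply: qnorm_le => i; exact: L2closure_sub (Hs_sub i).1 (r_in i).
Qed.

(* [r / t] lies in the unit ball of the quotient norm for every
   [t > ||S r|| / delta]; letting [t] decrease to that bound avoids a case
   split on [S r = 0]. *)
Lemma dF_ge_dual {h r D} : Linf mu (Ssum h) -> inH Hs r ->
  dFqnorm mu Hs psi c h = D%:E ->
  - (D * (delta^-1 * L2norm mu (Ssum r))) <= dF mu psi c h r.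
Proof.
move=> Lh r_in dFqE; set b := delta^-1 * _.
have b_ge0 : 0 <= b by rewrite mulr_ge0 ?L2norm_ge0// invr_ge0 ltW.
rewrite lerNl; apply: ler_mul_from_above => t b_lt_t.
have t_gt0 : 0 < t := le_lt_trans b_ge0 b_lt_t.
pose r' := fun i x => t^-1 * r i x.
have r'_in : inH Hs r' := fun i => subspaceZ (Hs_sub i) t^-1 (r_in i).
have qr' : qnorm mu Hs r' <= 1.
  apply: le_trans (qnorm_inH_le r'_in) _.
  have t_inv_ge0 : 0 <= t^-1 by rewrite invr_ge0 ltW.
  rewrite SsumZ (L2normZ t_inv_ge0 (Linf_Ssum_inH r_in)) mulrCA -/b.
  by rewrite mulrC ler_pdivrMr// mul1r ltW.
have := oppr_dF_le_dFqnorm r'_in qr' dFqE.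
by rewrite (dFZ Lc dpsi_cont _ Lh (Linf_Ssum_inH r_in)) -mulrN mulrC ler_pdivrMr.
Qed.

End DualBound.

Theorem mainTheorem6 (d : measure_display) (X : measurableType d) (R : realType)
  (mu : {finite_measure set X -> \bar R}) (N : nat) (HN : (0 < N)%N)
  (c : X -> R) (Hc : Linf mu c)
  (psi : R -> R) (Hpsi_d : forall x : R, derivable psi x 1)
  (Hpsi_c : continuous ((derive1 psi)))
  (Hs : 'I_N -> set (X -> R)) (HHs : forall i, is_subspace mu (Hs i))
  (Hcsp : closed_sum_property mu Hs)
  (delta : R) (Hdelta : 0 < delta)
  (Hdelta_ineq : forall g : 'I_N -> X -> R, inHbar mu Hs g ->
      qnorm mu Hs g <= delta^-1 * L2norm mu (Ssum g))
  (sigma : R -> R) (Hconv : strongly_convex_bdd psi sigma)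
  (M : set ('I_N -> X -> R)) (HMH : M `<=` inH Hs)
  (Rad : R) (HRad : 0 < Rad) (HM : unif_bdd_sum mu c M Rad) :
  forall ht h : 'I_N -> X -> R, M ht -> M h ->
    (- ((2 * delta ^+ 2 * sigma Rad)^-1)%:E * (dFqnorm mu Hs psi c h * dFqnorm mu Hs psi c h)
      <= (Ffun mu psi c ht - Ffun mu psi c h)%:E)%E.
Proof.
(* The closed sum property is only needed to produce [delta]; here the
   [delta]-inequality is assumed directly, so [Hcsp] and [HN] are unused. *)
move=> ht h Mht Mh.
have psi_cont : continuous psi.
  by move=> x; apply/differentiable_continuous/derivable1_diffP.
have sigma_gt0 := (Hconv _ HRad).1.
have ht_in := HMH _ Mht; have h_in := HMH _ Mh.
have Lh := Linf_Ssum_inH HHs h_in; have Lht := Linf_Ssum_inH HHs ht_in.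
have expansion := Ffun_sub_ge Hc Hpsi_c psi_cont Hconv HRad Lh Lht (HM _ Mh) (HM _ Mht).
have k_gt0 : 0 < (2 * delta ^+ 2 * sigma Rad)^-1.
  by rewrite invr_gt0 !mulr_gt0 ?exprn_gt0.
case E : (dFqnorm mu Hs psi c h) => [D| |]; try exact: oppe_mul_sqr_infty.
have r_in : inH Hs (fun i x => ht i x - h i x).
  by move=> i; have := subspaceB (HHs i) (ht_in i) (h_in i); apply.
have dual := dF_ge_dual HHs Hdelta Hdelta_ineq Hc Hpsi_c Lh r_in E.
have := quadratic_lower_bound D (L2norm mu (Ssum (fun i x => ht i x - h i x)))
  sigma_gt0 Hdelta.
rewrite -EFinN -!EFinM lee_fin; lra.
Qed.
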